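(* Any expressivity situation $\mathscr{S}$ is adequate: for every $B$-coalgebra $x\colon X\to BX$ one has $\nu\bigl(x^*\circ\overline{B}^{\underline{\Omega},\tau}\bigr)\sqsubseteq\bigwedge_{\varphi\in L_{\mathscr{S}}}[\![\varphi]\!]_x^{*}\underline{\Omega}$ in the fiber $\mathcal{E}_X$.
   Context: An expressivity situation $\mathscr{S}=(p,B,\Omega,\underline{\Omega},\Sigma,\Lambda,(f_\sigma)_{\sigma\in\Sigma},(\tau_\lambda)_{\lambda\in\Lambda})$ consists of: a fibration $p\colon\mathcal{E}\to\mathcal{C}$ whose fibers $\mathcal{E}_X$ are complete lattices (order $\sqsubseteq$, meets written $\bigwedge$, top $\top$) and whose reindexing functors $f^*$ preserve arbitrary meets; a functor $B\colon\mathcal{C}\to\mathcal{C}$; an object $\Omega\in\mathcal{C}$ with finite powers and an object $\underline{\Omega}\in\mathcal{E}$ above $\Omega$; a ranked alphabet $\Sigma$ with arrows $f_\sigma\colon\Omega^{\mathrm{rank}(\sigma)}\to\Omega$, each having a lifting $g_\sigma\colon\underline{\Omega}^{\mathrm{rank}(\sigma)}\to\underline{\Omega}$ in $\mathcal{E}$ with $pg_\sigma=f_\sigma$; a set $\Lambda$ and arrows $\tau_\lambda\colon B\Omega\to\Omega$. The logic $L_{\mathscr{S}}$ has formulas $\varphi::=\sigma(\varphi_1,\dots,\varphi_{\mathrm{rank}(\sigma)})\ (\sigma\in\Sigma)\mid\heartsuit_\lambda\varphi\ (\lambda\in\Lambda)$, interpreted on a coalgebra $x\colon X\to BX$ by $[\![\sigma(\varphi_1,\dots)]\!]_x=f_\sigma\circ\langle[\![\varphi_1]\!]_x,\dots\rangle$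 and $[\![\heartsuit_\lambda\varphi]\!]_x=\tau_\lambda\circ B[\![\varphi]\!]_x\circ x$. The codensity lifting is $\overline{B}^{\underline{\Omega},\tau}P=\bigwedge_{\lambda\in\Lambda,\,h\in\mathcal{E}(P,\underline{\Omega})}(\tau_\lambda\circ B(ph))^*\underline{\Omega}$, and the codensity bisimilarity of $x$ is the greatest fixed point $\nu(x^*\circ\overline{B}^{\underline{\Omega},\tau})$ of the monotone map $x^*\circ\overline{B}^{\underline{\Omega},\tau}$ on $\mathcal{E}_X$. The right-hand side of the claim is the fibrational logical equivalence of $x$. *)

From mathcomp Require Import all_boot.
Set Implicit Arguments.
Unset Strict Implicit.
Unset Printing Implicit Defensive.

Record Category := {
  Ob :> Type;
  Hom : Ob -> Ob -> Type;
  idc : forall X, Hom X X;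
  comp : forall X Y Z, Hom Y Z -> Hom X Y -> Hom X Z;
  comp_id_l : forall X Y (f : Hom X Y), comp (idc Y) f = f;
  comp_id_r : forall X Y (f : Hom X Y), comp f (idc X) = f;
  comp_assoc : forall X Y Z W (h : Hom Z W) (g : Hom Y Z) (f : Hom X Y),
      comp h (comp g f) = comp (comp h g) f
}.
Arguments Hom {C} X Y : rename.
Arguments idc {C} X : rename.
Arguments comp {C X Y Z} g f : rename.

Record Endofunctor (C : Category) := {
  fobj :> Ob C -> Ob C;
  fmap : forall X Y, Hom X Y -> Hom (fobj X) (fobj Y);
  fmap_id : forall X, fmap (idc X) = idc (fobj X);
  fmap_comp : forall X Y Z (g : Hom Y Z) (f : Hom X Y),
      fmap (comp g f) = comp (fmap g) (fmap f)
}.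
Arguments fmap {C} B {X Y} f : rename.

Record FinPowers (C : Category) (Om : Ob C) := {
  pw : nat -> Ob C;
  proj : forall n, 'I_n -> Hom (pw n) Om;
  tuple : forall (X : Ob C) n, ('I_n -> Hom X Om) -> Hom X (pw n);
  proj_tuple : forall X n (fs : 'I_n -> Hom X Om) i,
      comp (proj i) (tuple fs) = fs i;
  tuple_unique : forall X n (fs : 'I_n -> Hom X Om) (h : Hom X (pw n)),
      (forall i, comp (proj i) h = fs i) -> h = tuple fs
}.
Arguments pw {C Om} P n : rename.
Arguments proj {C Om} P {n} i : rename.
Arguments tuple {C Om} P {X n} fs : rename.

(* ---------- Fibrations with complete-lattice fibers (CLat_/\-fibrations) ----
   A fibration p : E -> C whose fibers are (thin) complete lattices is
   presented, up to equivalence, by its fibers E_X, its reindexing maps f^*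
   and the order; an arrow P -> Q of E above f : X -> Y exists (and is then
   unique) iff P ⊑ f^* Q. *)
Record CLatFib (C : Category) := {
  fib : Ob C -> Type;
  fle : forall X, fib X -> fib X -> Prop;
  fle_refl : forall X (a : fib X), fle a a;
  fle_trans : forall X (a b c : fib X), fle a b -> fle b c -> fle a c;
  fle_antisym : forall X (a b : fib X), fle a b -> fle b a -> a = b;
  fmeet : forall X, (fib X -> Prop) -> fib X;
  fmeet_lb : forall X (S : fib X -> Prop) a, S a -> fle (fmeet S) a;
  fmeet_glb : forall X (S : fib X -> Prop) b,
      (forall a, S a -> fle b a) -> fle b (fmeet S);
  reidx : forall X Y, Hom X Y -> fib Y -> fib X;
  reidx_id : forall X (a : fib X), reidx (idc X) a = a;
  reidx_comp : forall X Y Z (g : Hom Y Z) (f : Hom X Y) (a : fib Z),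
      reidx (comp g f) a = reidx f (reidx g a);
  reidx_meet : forall X Y (f : Hom X Y) (S : fib Y -> Prop),
      reidx f (fmeet S) = fmeet (fun a => exists2 b, S b & a = reidx f b)
}.
Arguments fib {C} p X : rename.
Arguments fle {C p X} a b : rename.
Arguments fmeet {C p X} S : rename.
Arguments reidx {C p X Y} f a : rename.

(* the E-power  underline(Omega)^n, lying above Omega^n: the product in E of
   n copies of OmU, i.e. /\_i pi_i^* OmU *)
Definition fpow (C : Category) (p : CLatFib C) (Om : Ob C) (P : FinPowers Om)
  (OmU : fib p Om) (n : nat) : fib p (pw P n) :=
  fmeet (fun a => exists i : 'I_n, a = reidx (proj P i) OmU).

Inductive formula (Sig : Type) (rank : Sig -> nat) (Lam : Type) : Type :=
| FOp : forall s : Sig, ('I_(rank s) -> formula rank Lam) -> formula rank Lam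
| FMod : Lam -> formula rank Lam -> formula rank Lam.

Definition sem (C : Category) (B : Endofunctor C) (Om : Ob C) (P : FinPowers Om)
  (Sig : Type) (rank : Sig -> nat) (f : forall s, Hom (pw P (rank s)) Om)
  (Lam : Type) (tau : Lam -> Hom (B Om) Om)
  (X : Ob C) (x : Hom X (B X)) : formula rank Lam -> Hom X Om :=
  fix go (phi : formula rank Lam) : Hom X Om :=
  match phi with
  | FOp s args => comp (f s) (tuple P (fun i => go (args i)))
  | FMod l psi => comp (tau l) (comp (fmap B (go psi)) x)
  end.

(* E(Q, OmU) = arrows h : X -> Om of C with Q ⊑ h^* OmU (and p h = h). *)
Definition codensity (C : Category) (p : CLatFib C) (B : Endofunctor C)
  (Om : Ob C) (OmU : fib p Om) (Lam : Type) (tau : Lam -> Hom (B Om) Om)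
  (X : Ob C) (Q : fib p X) : fib p (B X) :=
  fmeet (fun a => exists l : Lam, exists h : Hom X Om,
           fle Q (reidx h OmU) /\ a = reidx (comp (tau l) (fmap B h)) OmU).

Definition is_gfp (C : Category) (p : CLatFib C) (X : Ob C)
  (F : fib p X -> fib p X) (nu : fib p X) : Prop :=
  F nu = nu /\ forall a, F a = a -> fle a nu.

(* Every post-fixed point Q of x^* o codensity is contained in the predicate
   [[phi]]^* OmU of each formula, by induction on phi: an operator formula is
   handled by the lifting of f_s, since the tuple of the interpretations of
   its arguments is an E-arrow Q -> OmU^n; a modal formula is handled by the
   codensity lifting itself, one of whose defining meets is exactly
   (tau_l o B [[psi]])^* OmU as soon as [[psi]] is an E-arrow Q -> OmU.
   The greatest fixed point is in particular post-fixed. *)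
From Pilot Require Import Defs.
From mathcomp Require Import all_boot.

Set Implicit Arguments.
Unset Strict Implicit.

Section Reindexing.

Variables (C : Category) (p : CLatFib C).

(* Reindexing preserves the meet of {a, b}, which is a when a ⊑ b. *)
Lemma reidx_mono (X Y : Ob C) (g : Hom X Y) (a b : fib p Y) :
  fle a b -> fle (reidx g a) (reidx g b).
Proof.
move=> le_ab.
have meet_ab : fmeet (fun c => c = a \/ c = b) = a.
  apply: fle_antisym; first by apply: fmeet_lb; left.
  by apply: fmeet_glb => c [->|->]; [apply: fle_refl|].
by rewrite -meet_ab reidx_meet; apply: fmeet_lb; exists b; [right|].
Qed.

Lemma le_reidx_tuple_fpow (Om : Ob C) (P : FinPowers Om) (OmU : fib p Om)
    (X : Ob C) (n : nat) (fs : 'I_n -> Hom X Om) (Q : fib p X) :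
  (forall i, fle Q (reidx (fs i) OmU)) ->
  fle Q (reidx (Defs.tuple P fs) (fpow P OmU n)).
Proof.
move=> le_Q; rewrite /fpow reidx_meet.
apply: fmeet_glb => _ [_ [i ->] ->].
by rewrite -reidx_comp proj_tuple.
Qed.

Lemma codensity_le_reidx (B : Endofunctor C) (Om : Ob C) (OmU : fib p Om)
    (Lam : Type) (tau : Lam -> Hom (B Om) Om) (X : Ob C) (Q : fib p X)
    (l : Lam) (h : Hom X Om) :
  fle Q (reidx h OmU) ->
  fle (codensity OmU tau Q) (reidx (Defs.comp (tau l) (fmap B h)) OmU).
Proof. by move=> le_Qh; apply: fmeet_lb; exists l, h. Qed.

End Reindexing.

Section Adequacy.

Variables (C : Category) (p : CLatFib C) (B : Endofunctor C).
Variables (Om : Ob C) (P : FinPowers Om) (OmU : fib p Om).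
Variables (Sig : Type) (rank : Sig -> nat) (f : forall s, Hom (pw P (rank s)) Om).
Hypothesis lift_f : forall s, fle (fpow P OmU (rank s)) (reidx (f s) OmU).
Variables (Lam : Type) (tau : Lam -> Hom (B Om) Om) (X : Ob C) (x : Hom X (B X)).

Lemma postfixed_le_sem (Q : fib p X) :
  fle Q (reidx x (codensity OmU tau Q)) ->
  forall phi : formula rank Lam, fle Q (reidx (sem f tau x phi) OmU).
Proof.
move=> post; elim=> [s args IH | l psi IH] /=.
- rewrite reidx_comp; apply: fle_trans (reidx_mono _ (lift_f s)).
  exact: le_reidx_tuple_fpow.
- rewrite comp_assoc reidx_comp; apply: fle_trans post _.
  by apply: reidx_mono; apply: codensity_le_reidx.
Qed.

End Adequacy.

Theorem mainTheorem1
  (C : Category) (p : CLatFib C) (B : Endofunctor C)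
  (Om : Ob C) (P : FinPowers Om) (OmU : fib p Om)
  (Sig : Type) (rank : Sig -> nat) (f : forall s, Hom (pw P (rank s)) Om)
  (lift_f : forall s, fle (fpow P OmU (rank s)) (reidx (f s) OmU))
  (Lam : Type) (tau : Lam -> Hom (B Om) Om)
  (X : Ob C) (x : Hom X (B X)) (nu : fib p X)
  (Hnu : is_gfp (fun Q => reidx x (codensity OmU tau Q)) nu) :
  fle nu (fmeet (fun a => exists phi : formula rank Lam,
                   a = reidx (sem f tau x phi) OmU)).
Proof.
have [nu_fixed _] := Hnu.
have nu_postfixed : fle nu (reidx x (codensity OmU tau nu)).
  by rewrite nu_fixed; apply: fle_refl.
apply: fmeet_glb => _ [phi ->].
exact: postfixed_le_sem.
Qed.
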